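(* For any $1\le q\le\mathsf n-1$, \[\big|\log\mathbb P_{\pi_V}(X_q\mid X_{q+1:\mathsf n})\big|\le\log(\nu_q^{-1}),\] and for all $\ell\ge1$ and $1\le q\le\mathsf n-1$, \[\big|\log\mathbb P_{\pi_V}(X_q\mid X_{q+1:\mathsf n})-\log\mathbb P_{\pi_V}(X_q\mid X_{q+1:\mathsf n+\ell})\big|\le\nu_q^{-1}\prod_{k=q+1}^{\mathsf n-1}(1-\nu_k),\] with the convention that an empty product equals $1$. These bounds hold for every realization of the observations.
   Context: $\pi_V$ is a probability distribution on a measurable space $\mathbb V$, $\mathbb X$ a discrete set, and $K_i:\mathbb X\times\mathbb V^2\to[0,\infty)$ ($i\ge1$) are such that each $K_i(\cdot,v,w)$ is a probability on $\mathbb X$. For any length $m\ge1$, $\mathbb P_{\pi_V}$ denotes the law of $(V_{1:m+1},X_{1:m})$ where $V_i$ are i.i.d. $\pi_V$ and, given $V$, the $X_i$ are independent with $\mathbb P(X_i=x\mid V)=K_i(x,V_i,V_{i+1})$ (these laws are consistent in $m$); $\mathbb P_{\pi_V}(X_q\mid X_{q+1:m})$ is the conditional probability of the observed value of $X_q$ given the observed $X_{q+1:m}$. Assumption H2: there exist $\nu_i>0$ with $\nu_i\le K_i(x,v,w)\le1$ for all $x,i,v,w$. *)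

From HB Require Import structures.
From mathcomp Require Import all_boot all_order all_algebra.
From mathcomp Require Import all_classical all_reals all_analysis.
Set Implicit Arguments. Unset Strict Implicit. Unset Printing Implicit Defensive.
Import Order.TTheory GRing.Theory Num.Theory.
Local Open Scope ring_scope.
Local Open Scope ereal_scope.

Fixpoint iint (R : realType) (d : measure_display) (V : measurableType d)
  (P : probability V R) (n : nat) (f : seq V -> \bar R) : \bar R :=
  match n with
  | 0 => f [::]
  | n'.+1 => \int[P]_v iint P n' (fun s => f (v :: s))
  end.

(* P_{pi_V}(X_a = x_a, ..., X_b = x_b) (a <= b): only V_a, ..., V_{b+1} are
   involved, they are i.i.d. pi_V, and given V the X_i are independent with
   P(X_i = x | V) = K i x V_i V_{i+1}.  The coordinate s_j of s stands for
   V_{a+j}. *)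
Definition obs_prob (R : realType) (d : measure_display) (V : measurableType d)
  (X : Type) (P : probability V R) (K : nat -> X -> V -> V -> R)
  (x : nat -> X) (a b : nat) : \bar R :=
  iint P (b - a).+2 (fun s =>
    (\prod_(a <= i < b.+1)
        K i (x i) (nth point s (i - a)) (nth point s (i - a).+1))%:E).

Definition cond_prob (R : realType) (d : measure_display) (V : measurableType d)
  (X : Type) (P : probability V R) (K : nat -> X -> V -> V -> R)
  (x : nat -> X) (q m : nat) : R :=
  (fine (obs_prob P K x q m) / fine (obs_prob P K x q.+1 m))%R.

From HB Require Import structures.
From mathcomp Require Import all_boot all_order all_algebra.
From mathcomp Require Import all_classical all_reals all_analysis.
From mathcomp Require Import measurable_realfun ring lra zify.
Import Order.TTheory GRing.Theory Num.Theory.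
Local Open Scope ring_scope.

(* Let beta_j^n(u) be the likelihood of n consecutive observations from index j
   given V_j = u.  Then P(X_q | X_{q+1:m}) is the ratio of the integrals of
   u |-> int K_q(u, w) du and of 1 against the same weight beta_{q+1}^{m-q};
   transporting both integrands forward to index n turns it into a ratio
   int f h / int g h where f, g do not depend on m and only the weight h >= 0
   does.  Because every kernel K_k is bounded below by nu_k, one forward step
   moves each pointwise ratio f/g towards the mean ratio by a fraction nu_k, so
   the interval [al, be] containing these ratios shrinks by the factor 1 - nu_k
   (a Doeblin minorisation).  Starting from [nu_q, 1], all the conditional
   probabilities with m >= n lie in one interval of length at most
   prod_k (1 - nu_k) whose left end is at least nu_q, and the elementary bound
   |ln c1 - ln c2| <= (be - al) / al concludes. *)

Lemma norm_ln_le_lnV {R : realType} {a c : R} : 0 < a -> a <= c <= 1 ->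
  `|ln c| <= ln a^-1.
Proof.
move=> a0 /andP[ac c1]; have c0 := lt_le_trans a0 ac.
by rewrite ler0_norm ?ln_le0// lnV ?posrE// lerN2 ler_ln ?posrE.
Qed.

Lemma norm_lnB_le {R : realType} {a b c1 c2 : R} : 0 < a ->
  a <= c1 <= b -> a <= c2 <= b -> `|ln c1 - ln c2| <= (b - a) / a.
Proof.
wlog c12 : c1 c2 / c1 <= c2.
  move=> wlog_c12 a0 h1 h2; have [c12|/ltW c21] := leP c1 c2.
    exact: wlog_c12.
  by rewrite distrC; apply: wlog_c12.
move=> a0 /andP[ac1 c1b] /andP[ac2 c2b].
have c10 := lt_le_trans a0 ac1; have c20 := lt_le_trans a0 ac2.
rewrite distrC ger0_norm; last by rewrite subr_ge0 ler_ln ?posrE.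
rewrite -ln_div ?posrE//.
have := @le_ln1Dx R (c2 / c1 - 1); rewrite [1 + _]addrC subrK => ln_le.
apply: le_trans (ln_le _) _.
  by have := divr_gt0 c20 c10; lra.
rewrite (_ : c2 / c1 - 1 = (c2 - c1) / c1); last by field; exact: lt0r_neq0.
apply: (@le_trans _ _ ((b - a) / c1)).
  by rewrite ler_pM2r ?invr_gt0//; lra.
by rewrite ler_wpM2l ?lef_pV2 ?posrE//; lra.
Qed.

Section bounded_measurable.
Context {R : realType}.

Definition bounded_measurable {d} {T : measurableType d} (f : T -> R) :=
  measurable_fun setT f /\ exists M, forall t, `|f t| <= M.

Definition ratio_between {T} (al be : R) (f g : T -> R) :=
  forall t, al * g t <= f t <= be * g t.

Section single.
Context {d} {T : measurableType d}.
Implicit Types f g : T -> R.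

Lemma bounded_measurable_cst c : bounded_measurable (fun _ : T => c).
Proof. by split; [exact: measurable_cst | exists `|c|]. Qed.

Lemma bounded_measurableD {f g} :
  bounded_measurable f -> bounded_measurable g ->
  bounded_measurable (fun t => f t + g t).
Proof.
move=> [mf [M fM]] [mg [N gN]]; split; first exact: measurable_funD.
by exists (M + N) => t; rewrite (le_trans (ler_normD _ _)) ?lerD.
Qed.

Lemma bounded_measurableM {f g} :
  bounded_measurable f -> bounded_measurable g ->
  bounded_measurable (fun t => f t * g t).
Proof.
move=> [mf [M fM]] [mg [N gN]]; split; first exact: measurable_funM.
by exists (M * N) => t; rewrite normrM ler_pM.
Qed.

Lemma bounded_measurableZ c {f} : bounded_measurable f ->
  bounded_measurable (fun t => c * f t).
Proof. exact/bounded_measurableM/bounded_measurable_cst. Qed.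

End single.

Section pair.
Context {d1 d2} {T1 : measurableType d1} {T2 : measurableType d2}.
Implicit Type F : T1 * T2 -> R.

Lemma bounded_measurable_fst {g : T1 -> R} : bounded_measurable g ->
  bounded_measurable (fun p : T1 * T2 => g p.1).
Proof. by move=> [mg [M gM]]; split; [exact: measurableT_comp | exists M]. Qed.

Lemma bounded_measurable_snd {g : T2 -> R} : bounded_measurable g ->
  bounded_measurable (fun p : T1 * T2 => g p.2).
Proof. by move=> [mg [M gM]]; split; [exact: measurableT_comp | exists M]. Qed.

Lemma bounded_measurable_pair1 {F} v : bounded_measurable F ->
  bounded_measurable (fun u => F (u, v)).
Proof.
by move=> [mF [M FM]]; split; [exact: measurable_fun_pair1 | exists M].
Qed.

Lemma bounded_measurable_pair2 {F} u : bounded_measurable F ->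
  bounded_measurable (fun v => F (u, v)).
Proof.
by move=> [mF [M FM]]; split; [exact: measurable_fun_pair2 | exists M].
Qed.

End pair.
End bounded_measurable.

Section probability_Rintegral.
Context {R : realType} {d} {T : measurableType d} (P : probability T R).
Implicit Types f g : T -> R.

Lemma bounded_measurable_integrable {f} :
  bounded_measurable f -> P.-integrable setT (EFin \o f).
Proof.
move=> [mf [M fM]]; apply: measurable_bounded_integrable => //.
  by rewrite /= probability_setT ltry.
exists M; split; first exact: num_real.
by move=> y My t _; apply: le_trans (fM t) _; exact: ltW.
Qed.

Lemma integral_bounded_measurable {f} : bounded_measurable f ->
  (\int[P]_t (f t)%:E = (\int[P]_t f t)%:E)%E.
Proof.
move=> /bounded_measurable_integrable /(integrable_fin_num measurableT) fin.
by rewrite fineK.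
Qed.

Lemma Rintegral_cst_probability c : \int[P]_(t in setT) c = c.
Proof.
rewrite Rintegral_cst// (_ : fine _ = 1) ?mulr1//.
by have /= -> := probability_setT P.
Qed.

Lemma le_Rintegral_bounded f g : bounded_measurable f -> bounded_measurable g ->
  (forall t, f t <= g t) -> \int[P]_t f t <= \int[P]_t g t.
Proof.
move=> bf bg fg; apply: le_Rintegral => //;
  exact: bounded_measurable_integrable.
Qed.

Lemma Rintegral_lin a b f g : bounded_measurable f -> bounded_measurable g ->
  \int[P]_t (a * f t + b * g t) = a * \int[P]_t f t + b * \int[P]_t g t.
Proof.
move=> bf bg; have int := bounded_measurable_integrable.
rewrite RintegralD//; try exact/int/bounded_measurableZ.
by rewrite !RintegralZl//; exact: int.
Qed.

Lemma Rintegral_ratio_between al be f g h :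
  bounded_measurable f -> bounded_measurable g -> bounded_measurable h ->
  (forall t, 0 <= h t) -> 0 < \int[P]_t (g t * h t) ->
  ratio_between al be f g ->
  al <= \int[P]_t (f t * h t) / \int[P]_t (g t * h t) <= be.
Proof.
move=> bf bg bh h0 gh_gt0 fg.
have bgh := bounded_measurableM bg bh.
have igh := bounded_measurable_integrable bgh.
rewrite ler_pdivlMr// ler_pdivrMr// -!RintegralZl//.
have lo t : al * (g t * h t) <= f t * h t.
  by rewrite mulrA ler_wpM2r//; case/andP: (fg t).
have hi t : f t * h t <= be * (g t * h t).
  by rewrite mulrA ler_wpM2r//; case/andP: (fg t).
apply/andP; split; apply: le_Rintegral_bounded => //;
  by [exact: bounded_measurableZ | exact: bounded_measurableM].
Qed.

End probability_Rintegral.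

Section fubini.
Context {R : realType} {d1 d2 : measure_display}.
Context {T1 : measurableType d1} {T2 : measurableType d2}.
Variables (P1 : probability T1 R) (P2 : probability T2 R).
Context {F : T1 * T2 -> R}.
Hypotheses (bF : bounded_measurable F) (F0 : forall p, 0 <= F p).

Let mEF : measurable_fun setT (EFin \o F).
Proof. by case: bF => mF _; exact/measurable_EFinP. Qed.

Let EF0 p : (0 <= (EFin \o F) p)%E.
Proof. by rewrite lee_fin. Qed.

Lemma bounded_measurable_Rintegral2 :
  bounded_measurable (fun u => \int[P2]_v F (u, v)).
Proof.
split.
  apply: measurableT_comp; first exact: fine_measurable measurableT.
  exact: (measurable_fun_fubini_tonelli_F (EFin \o F)).
case: bF => _ [M FM]; exists M => u.
rewrite ger0_norm; last exact: Rintegral_ge0.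
rewrite -[leRHS](Rintegral_cst_probability P2); apply: le_Rintegral_bounded.
- exact: bounded_measurable_pair2.
- exact: bounded_measurable_cst.
- by move=> v; rewrite (le_trans (ler_norm _)).
Qed.

Lemma bounded_measurable_Rintegral1 :
  bounded_measurable (fun v => \int[P1]_u F (u, v)).
Proof.
split.
  apply: measurableT_comp; first exact: fine_measurable measurableT.
  exact: (measurable_fun_fubini_tonelli_G (EFin \o F)).
case: bF => _ [M FM]; exists M => v.
rewrite ger0_norm; last exact: Rintegral_ge0.
rewrite -[leRHS](Rintegral_cst_probability P1); apply: le_Rintegral_bounded.
- exact: bounded_measurable_pair1.
- exact: bounded_measurable_cst.
- by move=> u; rewrite (le_trans (ler_norm _)).
Qed.

Lemma Rintegral_fubini :
  \int[P1]_u \int[P2]_v F (u, v) = \int[P2]_v \int[P1]_u F (u, v).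
Proof.
apply: EFin_inj.
rewrite -!integral_bounded_measurable; last 2 first.
- exact: bounded_measurable_Rintegral1.
- exact: bounded_measurable_Rintegral2.
transitivity (\int[P1]_u \int[P2]_v (F (u, v))%:E)%E.
  apply: eq_integral => u _.
  by rewrite integral_bounded_measurable//; exact: bounded_measurable_pair2.
rewrite (fubini_tonelli (EFin \o F))//.
apply: eq_integral => v _.
by rewrite integral_bounded_measurable//; exact: bounded_measurable_pair1.
Qed.

End fubini.

Section forward_backward.
Context {R : realType} {d} {V : measurableType d} (P : probability V R).
Variables (k : nat -> V -> V -> R) (nu : nat -> R).
Hypothesis k_measurable :
  forall j, measurable_fun setT (fun p : V * V => k j p.1 p.2).
Hypothesis nu_gt0 : forall j, 0 < nu j.
Hypothesis k_bounds : forall j u w, nu j <= k j u w <= 1.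

Let k_ge0 j u w : 0 <= k j u w.
Proof. by have /andP[+ _] := k_bounds j u w; apply/le_trans/ltW. Qed.

Let k_le1 j u w : k j u w <= 1.
Proof. by have /andP[] := k_bounds j u w. Qed.

Let k_ge_nu j u w : nu j <= k j u w.
Proof. by have /andP[] := k_bounds j u w. Qed.

Let nu_le1 j : nu j <= 1.
Proof. exact: le_trans (k_ge_nu j point point) (k_le1 j point point). Qed.

Let bounded_measurable_k j : bounded_measurable (fun p : V * V => k j p.1 p.2).
Proof. by split => //; exists 1 => p; rewrite ger0_norm. Qed.

Let bounded_measurable_k2 j u : bounded_measurable (k j u).
Proof. exact: bounded_measurable_pair2 (bounded_measurable_k j). Qed.

Let bounded_measurable_k1 j w : bounded_measurable (k j ^~ w).
Proof. exact: bounded_measurable_pair1 (bounded_measurable_k j). Qed.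

Fixpoint backward (n j : nat) (u : V) : R :=
  if n is n'.+1 then \int[P]_w (k j u w * backward n' j.+1 w) else 1.

Lemma backward_bounded n j :
  bounded_measurable (backward n j) /\ forall u, 0 <= backward n j u <= 1.
Proof.
elim: n j => [|n IH] j /=.
  by split=> [|u]; [exact: bounded_measurable_cst | rewrite ler01 lexx].
have [bb b01] := IH j.+1.
have b0 w : 0 <= backward n j.+1 w by case/andP: (b01 w).
have b1 w : backward n j.+1 w <= 1 by case/andP: (b01 w).
have bF : bounded_measurable
    (fun p : V * V => k j p.1 p.2 * backward n j.+1 p.2).
  exact/bounded_measurableM/bounded_measurable_snd.
split=> [|u].
  by apply: bounded_measurable_Rintegral2 bF _ => p; rewrite mulr_ge0.
rewrite Rintegral_ge0 => [/=|w _]; last by rewrite mulr_ge0.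
rewrite -[leRHS](Rintegral_cst_probability P); apply: le_Rintegral_bounded.
- exact: bounded_measurable_pair2 bF.
- exact: bounded_measurable_cst.
- by move=> w; rewrite mulr_ile1.
Qed.

Lemma bounded_measurable_backward n j : bounded_measurable (backward n j).
Proof. by have [] := backward_bounded n j. Qed.

Lemma backward_ge0 n j u : 0 <= backward n j u.
Proof. by have [_ /(_ u)/andP[]] := backward_bounded n j. Qed.

Lemma backward_ge_prod n j u : \prod_(j <= i < j + n) nu i <= backward n j u.
Proof.
elim: n j u => [|n IH] j u /=; first by rewrite addn0 big_geq.
rewrite big_ltn ?addnS ?ltnS ?leq_addr// -addSn.
rewrite -[leLHS](Rintegral_cst_probability P); apply: le_Rintegral_bounded.
- exact: bounded_measurable_cst.
- exact/bounded_measurableM/bounded_measurable_backward.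
- move=> w; apply: ler_pM => //; first exact/ltW.
  by apply: prodr_ge0 => i _; exact/ltW.
Qed.

Lemma iint_prod_backward n j c u :
  iint P n (fun s => (c * \prod_(j <= i < j + n)
    k i (nth point (u :: s) (i - j)) (nth point (u :: s) (i - j).+1))%:E) =
  (c * backward n j u)%:E.
Proof.
elim: n j c u => [|n IH] j c u /=; first by rewrite addn0 big_geq.
transitivity (\int[P]_w ((c * k j u w) * backward n j.+1 w)%:E)%E.
  apply: eq_integral => w _; rewrite -IH; congr (iint P n); apply: funext => s.
  rewrite big_ltn ?addnS ?ltnS ?leq_addr// subnn mulrA -addSn; congr (_ * _)%:E.
  apply: eq_big_nat => i /andP[ji _].
  by rewrite -[(i - j)%N]prednK ?subn_gt0// subnS.
under eq_integral do rewrite -mulrA.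
rewrite integral_bounded_measurable; last first.
  exact/bounded_measurableZ/bounded_measurableM/bounded_measurable_backward.
rewrite RintegralZl//; apply: bounded_measurable_integrable.
exact/bounded_measurableM/bounded_measurable_backward.
Qed.

Definition forward_step (g : V -> R) (j : nat) (w : V) : R :=
  \int[P]_u (g u * k j u w).

Fixpoint forward (g : V -> R) (j t : nat) : V -> R :=
  if t is t'.+1 then forward (forward_step g j) j.+1 t' else g.

Section forward_step.
Context {g : V -> R} (j : nat).
Hypotheses (bg : bounded_measurable g) (g0 : forall v, 0 <= g v).

Let bounded_measurable_gk :
  bounded_measurable (fun p : V * V => g p.1 * k j p.1 p.2).
Proof.
exact: bounded_measurableM (bounded_measurable_fst bg) (bounded_measurable_k j).
Qed.

Lemma bounded_measurable_forward_step : bounded_measurable (forward_step g j).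
Proof.
apply: (bounded_measurable_Rintegral1 P bounded_measurable_gk) => p.
by rewrite mulr_ge0.
Qed.

Lemma forward_step_ge0 w : 0 <= forward_step g j w.
Proof. by apply: Rintegral_ge0 => u _; rewrite mulr_ge0. Qed.

Lemma forward_step_ge w : nu j * \int[P]_u g u <= forward_step g j w.
Proof.
rewrite -RintegralZl//; last exact: bounded_measurable_integrable.
apply: le_Rintegral_bounded; first exact: bounded_measurableZ.
  exact: bounded_measurableM.
by move=> u; rewrite mulrC ler_wpM2l.
Qed.

Lemma forward_step_le w : forward_step g j w <= \int[P]_u g u.
Proof.
apply: le_Rintegral_bounded => //; first exact: bounded_measurableM.
by move=> u; rewrite ler_piMr.
Qed.

Lemma Rintegral_backwardS n :
  \int[P]_u (g u * backward n.+1 j u) =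
  \int[P]_w (forward_step g j w * backward n j.+1 w).
Proof.
have bF : bounded_measurable
    (fun p : V * V => g p.1 * (k j p.1 p.2 * backward n j.+1 p.2)).
  apply: bounded_measurableM (bounded_measurable_fst bg) _.
  apply: bounded_measurableM (bounded_measurable_k j) _.
  exact: bounded_measurable_snd (bounded_measurable_backward n j.+1).
transitivity (\int[P]_u \int[P]_w (g u * (k j u w * backward n j.+1 w))).
  apply: eq_Rintegral => u _ /=; rewrite RintegralZl//.
  apply: bounded_measurable_integrable.
  exact/bounded_measurableM/bounded_measurable_backward.
have F0 p : 0 <= g p.1 * (k j p.1 p.2 * backward n j.+1 p.2).
  by rewrite !mulr_ge0 ?backward_ge0.
move: (Rintegral_fubini P P bF F0) => /= ->.
apply: eq_Rintegral => w _ /=; rewrite /forward_step -RintegralZr//; last first.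
  exact/bounded_measurable_integrable/bounded_measurableM.
by apply: eq_Rintegral => u _; rewrite mulrA.
Qed.

End forward_step.

Lemma forward_bounded {g} j t : bounded_measurable g -> (forall v, 0 <= g v) ->
  bounded_measurable (forward g j t) /\ forall w, 0 <= forward g j t w.
Proof.
elim: t g j => [|t IH] g j bg g0 //=; apply: IH.
  exact: bounded_measurable_forward_step.
exact: forward_step_ge0.
Qed.

Lemma Rintegral_backward_forward g j t n :
  bounded_measurable g -> (forall v, 0 <= g v) ->
  \int[P]_u (g u * backward (t + n) j u) =
  \int[P]_w (forward g j t w * backward n (j + t) w).
Proof.
elim: t g j => [|t IH] g j bg g0; first by rewrite add0n addn0.
rewrite addSn Rintegral_backwardS// IH ?addSnnS//.
  exact: bounded_measurable_forward_step.
exact: forward_step_ge0.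
Qed.

Lemma forward_step_lin a b g h j w :
  bounded_measurable g -> bounded_measurable h ->
  forward_step (fun v => a * g v + b * h v) j w =
  a * forward_step g j w + b * forward_step h j w.
Proof.
move=> bg bh; rewrite /forward_step -Rintegral_lin.
- by apply: eq_Rintegral => u _; ring.
- exact: bounded_measurableM.
- exact: bounded_measurableM.
Qed.

Lemma forward_step_ratio_ge {h g} j w :
  bounded_measurable h -> (forall v, 0 <= h v) ->
  bounded_measurable g -> (forall v, 0 <= g v) -> 0 < \int[P]_u g u ->
  nu j * (\int[P]_u h u / \int[P]_u g u) * forward_step g j w <=
  forward_step h j w.
Proof.
move=> bh h0 bg g0 g_gt0; apply: le_trans (forward_step_ge j bh h0 w).
rewrite -mulrA ler_wpM2l ?(ltW (nu_gt0 j))//.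
rewrite -[leRHS](divfK (lt0r_neq0 g_gt0)) ler_wpM2l ?forward_step_le//.
by rewrite divr_ge0 ?Rintegral_ge0// => u _; exact: ltW.
Qed.

Lemma Rintegral_forward_step_gt0 {g} j :
  bounded_measurable g -> (forall v, 0 <= g v) -> 0 < \int[P]_u g u ->
  0 < \int[P]_w forward_step g j w.
Proof.
move=> bg g0 g_gt0; apply: (@lt_le_trans _ _ (nu j * \int[P]_u g u)).
  exact: mulr_gt0.
rewrite -[leLHS](Rintegral_cst_probability P); apply: le_Rintegral_bounded.
- exact: bounded_measurable_cst.
- exact: bounded_measurable_forward_step.
- by move=> w; exact: forward_step_ge.
Qed.

Lemma forward_step_affine_ge a b {ga gb} j w :
  bounded_measurable ga -> bounded_measurable gb -> (forall v, 0 <= gb v) ->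
  0 < \int[P]_u gb u -> (forall v, 0 <= a * ga v + b * gb v) ->
  nu j * (a * (\int[P]_u ga u / \int[P]_u gb u) + b) * forward_step gb j w <=
  a * forward_step ga j w + b * forward_step gb j w.
Proof.
move=> bga bgb gb0 gb_gt0 h0.
have bh := bounded_measurableD (bounded_measurableZ a bga)
  (bounded_measurableZ b bgb).
have := forward_step_ratio_ge j w bh h0 bgb gb0 gb_gt0.
rewrite forward_step_lin// Rintegral_lin//.
set A := \int[P]_u ga u; set B := \int[P]_u gb u.
suff -> : (a * A + b * B) / B = a * (A / B) + b by [].
by field; exact: lt0r_neq0.
Qed.

Lemma forward_step_contract {ga gb al be} j :
  bounded_measurable ga -> bounded_measurable gb -> (forall v, 0 <= gb v) ->
  0 < \int[P]_u gb u -> ratio_between al be ga gb ->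
  exists al' be', [/\ al <= al', be' <= be,
    be' - al' = (1 - nu j) * (be - al) &
    ratio_between al' be' (forward_step ga j) (forward_step gb j)].
Proof.
move=> bga bgb gb0 gb_gt0 between; set c := \int[P]_u ga u / \int[P]_u gb u.
have [al_le_c c_le_be] : al <= c /\ c <= be.
  have bgbZ a := bounded_measurableZ a bgb.
  have igb := bounded_measurable_integrable P bgb.
  rewrite /c ler_pdivlMr// ler_pdivrMr// -!RintegralZl//.
  by split; apply: le_Rintegral_bounded => // v; case/andP: (between v).
have nu_ge0 := ltW (nu_gt0 j).
(* Every pointwise ratio moves towards the mean ratio c by a fraction nu j. *)
exists (al + nu j * (c - al)), (be - nu j * (be - c)); split.
- by rewrite lerDl mulr_ge0// subr_ge0.
- by rewrite gerBl mulr_ge0// subr_ge0.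
- by ring.
have lo v : 0 <= 1 * ga v + - al * gb v by case/andP: (between v) => *; lra.
have hi v : 0 <= -1 * ga v + be * gb v by case/andP: (between v) => *; lra.
move=> w; apply/andP; split.
- have := forward_step_affine_ge 1 (- al) j w bga bgb gb0 gb_gt0 lo.
  by rewrite -/c; lra.
- have := forward_step_affine_ge (-1) be j w bga bgb gb0 gb_gt0 hi.
  by rewrite -/c; lra.
Qed.

Lemma forward_contract {ga gb al be} j t :
  bounded_measurable ga -> bounded_measurable gb ->
  (forall v, 0 <= ga v) -> (forall v, 0 <= gb v) ->
  0 < \int[P]_u gb u -> ratio_between al be ga gb ->
  exists al' be', [/\ al <= al', be' <= be,
    be' - al' = \prod_(j <= i < j + t) (1 - nu i) * (be - al) &
    ratio_between al' be' (forward ga j t) (forward gb j t)].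
Proof.
elim: t ga gb al be j => [|t IH] ga gb al be j bga bgb ga0 gb0 gb_gt0 between.
  by exists al, be; rewrite addn0 big_geq// mul1r.
have [al1 [be1 [al_le1 be1_le gap1 between1]]] :=
  forward_step_contract j bga bgb gb0 gb_gt0 between.
have [al' [be' [al1_le be'_le gap' between']]] := IH _ _ al1 be1 j.+1
  (bounded_measurable_forward_step j bga ga0)
  (bounded_measurable_forward_step j bgb gb0)
  (forward_step_ge0 j ga0) (forward_step_ge0 j gb0)
  (Rintegral_forward_step_gt0 j bgb gb0 gb_gt0) between1.
exists al', be'; split => //; first exact: le_trans al_le1 al1_le.
  exact: le_trans be'_le be1_le.
by rewrite gap' gap1 -addSnnS [in RHS]big_ltn ?leq_addr//; ring.
Qed.

Lemma Rintegral_backward_gt0 n j : 0 < \int[P]_u backward n j u.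
Proof.
apply: (@lt_le_trans _ _ (\prod_(j <= i < j + n) nu i)).
  by apply: prodr_gt0 => i _.
rewrite -[leLHS](Rintegral_cst_probability P); apply: le_Rintegral_bounded.
- exact: bounded_measurable_cst.
- exact: bounded_measurable_backward.
- by move=> u; exact: backward_ge_prod.
Qed.

Let bounded_measurable_cst1 : bounded_measurable (cst 1 : V -> R).
Proof. exact: bounded_measurable_cst. Qed.

Let cst1_ge0 (v : V) : 0 <= cst 1 v :> R.
Proof. exact: ler01. Qed.

Lemma ratio_between_forward_step_cst1 j :
  ratio_between (nu j) 1 (forward_step (cst 1) j) (cst 1).
Proof.
have b1 := bounded_measurable_cst1; have one0 := cst1_ge0.
have Ione := Rintegral_cst_probability P 1.
move=> w; rewrite mulr1 mul1r; apply/andP; split.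
  by have := forward_step_ge j b1 one0 w; rewrite Ione mulr1.
by have := forward_step_le j b1 one0 w; rewrite Ione.
Qed.

Lemma backward_ratio_bounds q n : (q < n)%N ->
  exists al be, [/\ nu q <= al, be <= 1,
    be - al <= \prod_(q.+1 <= i < n) (1 - nu i) &
    forall m, (n <= m)%N ->
      al <= \int[P]_u backward (m - q).+1 q u /
            \int[P]_u backward (m - q) q.+1 u <= be].
Proof.
move=> qn; set t := (n - q.+1)%N.
have b1 := bounded_measurable_cst1; have one0 := cst1_ge0.
have bga := bounded_measurable_forward_step q b1 one0.
have ga0 := forward_step_ge0 q one0.
have one_gt0 : 0 < \int[P]_u cst 1 u :> R by rewrite Rintegral_cst_probability.
have [al [be [nu_le_al be_le1 gap ratio]]] := forward_contract q.+1 t bga b1 ga0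
  one0 one_gt0 (ratio_between_forward_step_cst1 q).
exists al, be; split => //.
  rewrite gap (_ : q.+1 + t = n)%N; last by lia.
  rewrite ler_piMr ?lerBlDr ?lerDl ?(ltW (nu_gt0 q))//.
  by apply: prodr_ge0 => i _; rewrite subr_ge0.
move=> m nm; set h := backward (m - n).+1 n.
have num : \int[P]_u backward (m - q).+1 q u =
           \int[P]_w (forward (forward_step (cst 1) q) q.+1 t w * h w).
  have -> : ((m - q).+1 = t.+1 + (m - n).+1)%N by lia.
  under eq_Rintegral do rewrite -[backward _ _ _]mul1r.
  by rewrite Rintegral_backward_forward// (_ : q + t.+1 = n)%N//; lia.
have den : \int[P]_u backward (m - q) q.+1 u =
           \int[P]_w (forward (cst 1) q.+1 t w * h w).
  have -> : (m - q = t + (m - n).+1)%N by lia.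
  under eq_Rintegral do rewrite -[backward _ _ _]mul1r.
  by rewrite Rintegral_backward_forward// (_ : q.+1 + t = n)%N//; lia.
have den_gt0 := Rintegral_backward_gt0 (m - q) q.+1; rewrite den in den_gt0.
rewrite num den; apply: Rintegral_ratio_between => //.
- by have [] := forward_bounded q.+1 t bga ga0.
- by have [] := forward_bounded q.+1 t b1 one0.
- exact: bounded_measurable_backward.
- exact: backward_ge0.
Qed.

End forward_backward.

Lemma iintS {R : realType} {d} {V : measurableType d} (P : probability V R) n
    (f : seq V -> \bar R) :
  iint P n.+1 f = (\int[P]_v iint P n (fun s => f (v :: s)))%E.
Proof. by []. Qed.

Section observations.
Context {R : realType} {d} {V : measurableType d} {X : Type}.
Variable P : probability V R.
Variables (K : nat -> X -> V -> V -> R) (nu : nat -> R) (x : nat -> X).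
Hypothesis K_measurable : forall i y, (1 <= i)%N ->
  measurable_fun setT (fun vw : V * V => K i y vw.1 vw.2).
Hypothesis nu_gt0 : forall i, (1 <= i)%N -> 0 < nu i.
Hypothesis K_bounds : forall i y v w, (1 <= i)%N -> nu i <= K i y v w <= 1.

(* The hypotheses only constrain the indices i >= 1; index 0 is mapped to 1. *)
Let kx j := K (maxn j 1) (x (maxn j 1)).
Let nux j := nu (maxn j 1).

Let kx_measurable j : measurable_fun setT (fun p : V * V => kx j p.1 p.2).
Proof. exact: K_measurable (leq_maxr _ _). Qed.

Let nux_gt0 j : 0 < nux j.
Proof. exact: nu_gt0 (leq_maxr _ _). Qed.

Let kx_bounds j u w : nux j <= kx j u w <= 1.
Proof. exact: K_bounds (leq_maxr _ _). Qed.

Let kxE i : (1 <= i)%N -> kx i = K i (x i).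
Proof. by move=> i1; rewrite /kx (maxn_idPl i1). Qed.

Let nuxE i : (1 <= i)%N -> nux i = nu i.
Proof. by move=> i1; rewrite /nux (maxn_idPl i1). Qed.

Lemma obs_prob_backward a b : (1 <= a)%N -> (a <= b)%N ->
  obs_prob P K x a b = (\int[P]_u backward P kx (b - a).+1 a u)%:E.
Proof.
move=> a1 ab; rewrite /obs_prob iintS.
rewrite (_ : b.+1 = a + (b - a).+1)%N; last by lia.
rewrite -integral_bounded_measurable; last first.
  exact: bounded_measurable_backward P _ _ kx_measurable nux_gt0 kx_bounds _ _.
apply: eq_integral => u _; rewrite -[backward _ _ _ _ _]mul1r.
rewrite -(iint_prod_backward P _ _ kx_measurable nux_gt0 kx_bounds).
congr (iint P _); apply: funext => s; rewrite mul1r; congr EFin.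
by apply: eq_big_nat => i /andP[ai _]; rewrite kxE// (leq_trans a1 ai).
Qed.

Lemma cond_prob_bounds q n : (1 <= q)%N -> (q < n)%N ->
  exists al be, [/\ nu q <= al, be <= 1,
    be - al <= \prod_(q.+1 <= i < n) (1 - nu i) &
    forall m, (n <= m)%N -> al <= cond_prob P K x q m <= be].
Proof.
move=> q1 qn.
have [al [be [nu_al be1 gap ratio]]] :=
  backward_ratio_bounds P _ _ kx_measurable nux_gt0 kx_bounds _ _ qn.
exists al, be; split.
- by rewrite -nuxE.
- by [].
- suff <- : \prod_(q.+1 <= i < n) (1 - nux i) =
             \prod_(q.+1 <= i < n) (1 - nu i) by [].
  apply: eq_big_nat => i /andP[qi _].
  by rewrite nuxE// (leq_trans q1 (ltnW qi)).
- move=> m nm; have qm : (q < m)%N by lia.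
  rewrite /cond_prob !obs_prob_backward ?(ltnW qm)//.
  by rewrite (_ : (m - q.+1).+1 = m - q)%N; [exact: ratio | lia].
Qed.

End observations.

Theorem lemma6 (R : realType) (d : measure_display) (V : measurableType d)
  (X : choiceType) (piV : probability V R) (K : nat -> X -> V -> V -> R)
  (nu : nat -> R)
  (HKmeas : forall i x, (1 <= i)%N ->
     measurable_fun setT (fun vw : V * V => K i x vw.1 vw.2))
  (HKprob : forall i v w, (1 <= i)%N ->
     (\esum_(x in [set: X]) (K i x v w)%:E = 1)%E)
  (Hnu : forall i, (1 <= i)%N -> 0 < nu i)
  (H2 : forall i x v w, (1 <= i)%N -> nu i <= K i x v w <= 1)
  (x : nat -> X) (n : nat) :
  (forall q, (1 <= q)%N -> (q <= n - 1)%N ->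
     `| ln (cond_prob piV K x q n) | <= ln (nu q)^-1)
  /\
  (forall l q, (1 <= l)%N -> (1 <= q)%N -> (q <= n - 1)%N ->
     `| ln (cond_prob piV K x q n) - ln (cond_prob piV K x q (n + l)) |
       <= (nu q)^-1 * \prod_(q.+1 <= k < n) (1 - nu k)).
Proof.
have bounds := cond_prob_bounds piV K nu x HKmeas Hnu H2.
split=> [q q1 qn | l q l1 q1 qn]; have {qn} qn : (q < n)%N by lia.
  have [al [be [nu_al be1 _ within]]] := bounds q n q1 qn.
  have /andP[al_c c_be] := within n (leqnn n).
  apply: norm_ln_le_lnV (Hnu q q1) _.
  by rewrite (le_trans nu_al al_c) (le_trans c_be be1).
have [al [be [nu_al _ gap within]]] := bounds q n q1 qn.
have al_gt0 := lt_le_trans (Hnu q q1) nu_al.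
have /andP[al_c c_be] := within n (leqnn n).
apply: le_trans (norm_lnB_le al_gt0 (within n _) (within (n + l)%N _)) _ => //.
  exact: leq_addr.
rewrite mulrC ler_pM ?subr_ge0 ?(le_trans al_c)//.
  by rewrite invr_ge0 ltW.
by rewrite lef_pV2 ?posrE ?Hnu.
Qed.
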